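(* Let $X$ be a countable infinite set, $\mathcal{I}$ a meager ideal on $X$, and $(Y,\rho)$ a countable crowded $T_1$ space with $\pi w(\rho)<\mathfrak{m}_c$. Then there is an $\mathcal{I}$-crowded topology $\tau$ on $X$ such that $(X,\tau)$ is homeomorphic to $(Y,\rho)$.
   Context: An ideal on $X$ is a family of subsets of $X$ closed under subsets and finite unions; all ideals are assumed proper ($X\notin\mathcal{I}$) and free (every finite subset of $X$ is in $\mathcal{I}$). Meagerness refers to $\mathcal{I}$ as a subset of $2^X$ (identifying sets with characteristic functions). A topology $\tau$ on $X$ is $\mathcal{I}$-crowded if $\tau\cap\mathcal{I}=\{\emptyset\}$. Crowded means without isolated points. $\mathfrak{m}_c$ is the least cardinal $\kappa$ such that MA$(\kappa)$ for countable posets fails. $\pi w$ denotes $\pi$-weight. *)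

From Stdlib Require Import List.
Import ListNotations.

Definition countable (T : Type) : Prop :=
  exists f : T -> nat, forall x y, f x = f y -> x = y.

Definition countably_infinite (T : Type) : Prop :=
  countable T /\ exists g : nat -> T, forall n m, g n = g m -> n = m.

Definition subset {T : Type} (A B : T -> Prop) : Prop := forall x, A x -> B x.

Definition finite_set {T : Type} (A : T -> Prop) : Prop :=
  exists l : list T, forall x, A x -> In x l.

Definition is_ideal {X : Type} (I : (X -> Prop) -> Prop) : Prop :=
  (forall A B, I B -> subset A B -> I A) /\
  (forall A B, I A -> I B -> I (fun x => A x \/ B x)) /\
  ~ I (fun _ => True) /\
  (forall A, finite_set A -> I A).

(* A basic clopen cylinder is given by a finite list of conditions (x, b):
   "x belongs to the set iff b = true". *)
Definition in_cyl {X : Type} (c : list (X * bool)) (A : X -> Prop) : Prop :=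
  forall p, In p c -> (A (fst p) <-> snd p = true).

Definition cyl_nonempty {X : Type} (c : list (X * bool)) : Prop :=
  exists A, in_cyl c A.

Definition nowhere_dense {X : Type} (N : (X -> Prop) -> Prop) : Prop :=
  forall c, cyl_nonempty c ->
    exists d, cyl_nonempty d /\
      (forall A, in_cyl d A -> in_cyl c A) /\
      (forall A, in_cyl d A -> ~ N A).

Definition meager {X : Type} (M : (X -> Prop) -> Prop) : Prop :=
  exists N : nat -> (X -> Prop) -> Prop,
    (forall n, nowhere_dense (N n)) /\
    (forall A, M A -> exists n, N n A).

Definition is_topology {T : Type} (tau : (T -> Prop) -> Prop) : Prop :=
  tau (fun _ => False) /\ tau (fun _ => True) /\
  (forall F : (T -> Prop) -> Prop, (forall U, F U -> tau U) ->
      tau (fun x => exists U, F U /\ U x)) /\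
  (forall U V, tau U -> tau V -> tau (fun x => U x /\ V x)).

Definition T1 {T : Type} (tau : (T -> Prop) -> Prop) : Prop :=
  forall x y, x <> y -> exists U, tau U /\ U x /\ ~ U y.

Definition crowded {T : Type} (tau : (T -> Prop) -> Prop) : Prop :=
  forall x, ~ tau (fun y => y = x).

Definition nonempty_set {T : Type} (U : T -> Prop) : Prop := exists x, U x.

Definition I_crowded {X : Type} (I : (X -> Prop) -> Prop)
  (tau : (X -> Prop) -> Prop) : Prop :=
  forall U, tau U -> I U -> forall x, ~ U x.

Definition homeomorphic {X Y : Type} (tau : (X -> Prop) -> Prop)
  (rho : (Y -> Prop) -> Prop) : Prop :=
  exists (f : X -> Y) (g : Y -> X),
    (forall x, g (f x) = x) /\ (forall y, f (g y) = y) /\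
    (forall V, rho V -> tau (fun x => V (f x))) /\
    (forall U, tau U -> rho (fun y => U (g y))).

Definition is_pi_base {T J : Type} (rho : (T -> Prop) -> Prop)
  (B : J -> T -> Prop) : Prop :=
  (forall j, rho (B j) /\ nonempty_set (B j)) /\
  (forall U, rho U -> nonempty_set U -> exists j, subset (B j) U).

Definition is_preorder {P : Type} (le : P -> P -> Prop) : Prop :=
  (forall p, le p p) /\ (forall p q r, le p q -> le q r -> le p r).

Definition dense_in {P : Type} (le : P -> P -> Prop) (D : P -> Prop) : Prop :=
  forall p, exists q, D q /\ le q p.

Definition is_filter {P : Type} (le : P -> P -> Prop) (G : P -> Prop) : Prop :=
  (exists p, G p) /\
  (forall p q, G p -> le p q -> G q) /\
  (forall p q, G p -> G q -> exists r, G r /\ le r p /\ le r q).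

Definition MA_countable (K : Type) : Prop :=
  forall (P : Type) (le : P -> P -> Prop),
    is_preorder le -> countable P -> inhabited P ->
    forall D : K -> P -> Prop, (forall k, dense_in le (D k)) ->
    exists G, is_filter le G /\ forall k, exists p, G p /\ D k p.

(* |J| < m_c, where m_c = least cardinal kappa with MA(kappa) failing:
   no K with MA failing has |K| <= |J|. *)
Definition card_lt_mc (J : Type) : Prop :=
  forall K : Type, ~ MA_countable K ->
    ~ exists h : K -> J, forall a b, h a = h b -> a = b.

(* pi w(rho) < m_c : some pi-base has cardinality below m_c
   (equivalently, the minimal one does). *)
Definition piweight_lt_mc {Y : Type} (rho : (Y -> Prop) -> Prop) : Prop :=
  exists (J : Type) (B : J -> Y -> Prop), is_pi_base rho B /\ card_lt_mc J.

From Stdlib Require Import List Arith Lia Classical ClassicalEpsilon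
  FunctionalExtensionality PropExtensionality ProofIrrelevance Cantor FinFun.
Import ListNotations.

(* Meagerness of I yields nonempty finite blocks S_k of X, escaping to
   infinity, such that no member of I contains S_k for infinitely many k.
   Finite partial bijections X -> Y form a countable poset; as |J| < m_c for a
   pi-base (B_j) of rho indexed by J, MA gives a filter meeting countably many
   totality requirements together with, for each j, the requirement that some
   block be mapped into B_j.  The union of the filter is a bijection f, and rho
   pulled back along f is homeomorphic to rho.  A nonempty open set contains,
   besides any finitely many points, a whole B_j, hence the image of a late
   block; so it contains infinitely many blocks and is not in I. *)

Lemma set_ext {T : Type} (U V : T -> Prop) : (forall x, U x <-> V x) -> U = V.
Proof.
  intro H; apply functional_extensionality; intro x.
  apply propositional_extensionality, H.
Qed.

Section OpenSets.

Variables (T : Type) (rho : (T -> Prop) -> Prop).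
Hypotheses (rho_top : is_topology rho) (rho_T1 : T1 rho).

Lemma open_setT : rho (fun _ => True).
Proof. apply rho_top. Qed.

Lemma open_inter (U V : T -> Prop) : rho U -> rho V -> rho (fun x => U x /\ V x).
Proof. destruct rho_top as (_ & _ & _ & Hinter); apply Hinter. Qed.

Lemma open_list_inter {A : Type} (Q : A -> T -> Prop) (L : list A) :
  (forall a, rho (Q a)) -> rho (fun y => forall a, In a L -> Q a y).
Proof.
  intro HQ; induction L as [|a L IH].
  - replace (fun y : T => forall b, In b [] -> Q b y) with (fun _ : T => True)
      by (apply set_ext; intro; simpl; tauto).
    exact open_setT.
  - replace (fun y : T => forall b, In b (a :: L) -> Q b y)
      with (fun y => Q a y /\ forall b, In b L -> Q b y).
    + now apply open_inter.
    + apply set_ext; intro y; simpl; split.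
      * intros [Ha HL] b [<- | Hb]; auto.
      * intro H; split; auto.
Qed.

Lemma open_neq (z : T) : rho (fun y => y <> z).
Proof.
  replace (fun y => y <> z) with (fun y => exists U, (rho U /\ ~ U z) /\ U y).
  - destruct rho_top as (_ & _ & Hunion & _); apply Hunion; tauto.
  - apply set_ext; intro y; split.
    + intros (U & (_ & Hz) & Hy) ->; tauto.
    + intro Hyz; destruct (rho_T1 y z Hyz) as (U & ? & ? & ?); exists U; tauto.
Qed.

Lemma open_compl_list (L : list T) : rho (fun y => ~ In y L).
Proof.
  replace (fun y => ~ In y L) with (fun y => forall z, In z L -> y <> z).
  - apply open_list_inter, open_neq.
  - apply set_ext; intro y; split.
    + intros H Hy; exact (H y Hy eq_refl).
    + intros H z Hz ->; tauto.
Qed.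

Hypothesis rho_crowded : crowded rho.

(* If [L] covered [V], then [{v}] would be open: it is [V] minus the finitely
   many other points of [L]. *)
Lemma crowded_open_infinite (V : T -> Prop) (v : T) :
  rho V -> V v -> forall L : list T, exists y, V y /\ ~ In y L.
Proof.
  intros HV Hv L; apply NNPP; intro HVL.
  set (Q := fun z y => z = v \/ y <> z).
  assert (HQ : forall z, rho (Q z)).
  { intro z; destruct (classic (z = v)) as [Hzv | Hzv].
    - replace (Q z) with (fun _ : T => True)
        by (apply set_ext; intro; unfold Q; tauto).
      exact open_setT.
    - replace (Q z) with (fun y => y <> z)
        by (apply set_ext; intro; unfold Q; tauto).
      apply open_neq. }
  apply (rho_crowded v).
  replace (fun y => y = v) with (fun y => V y /\ forall z, In z L -> Q z y).
  - apply open_inter; [exact HV | now apply open_list_inter].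
  - apply set_ext; intro y; split.
    + intros [Hy HQy].
      assert (HyL : In y L) by (apply NNPP; intro; apply HVL; eauto).
      destruct (HQy y HyL) as [-> | Hneq]; [reflexivity | now contradict Hneq].
    + intros ->; split; [exact Hv|].
      intros z _; unfold Q; destruct (classic (z = v)); auto.
Qed.

Lemma crowded_fresh : inhabited T -> forall L : list T, exists y, ~ In y L.
Proof.
  intros [y0] L.
  destruct (crowded_open_infinite (fun _ => True) y0 open_setT I L) as (y & _ & Hy).
  now exists y.
Qed.

End OpenSets.

Lemma countable_prod (A B : Type) : countable A -> countable B -> countable (A * B).
Proof.
  intros (fA & HfA) (fB & HfB).
  exists (fun p => to_nat (fA (fst p), fB (snd p))).
  intros [a b] [a' b'] E; apply to_nat_inj in E; injection E as Ea Eb.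
  now rewrite (HfA _ _ Ea), (HfB _ _ Eb).
Qed.

Fixpoint list_code {A : Type} (fA : A -> nat) (l : list A) : nat :=
  match l with
  | [] => 0
  | a :: l => S (to_nat (fA a, list_code fA l))
  end.

Lemma countable_list (A : Type) : countable A -> countable (list A).
Proof.
  intros (fA & HfA); exists (list_code fA).
  intro l; induction l as [|a l IH]; intros [|a' l'] E; try discriminate; [reflexivity|].
  apply eq_add_S, to_nat_inj in E; injection E as Ea El.
  now rewrite (HfA _ _ Ea), (IH _ El).
Qed.

Lemma countable_sig (A : Type) (P : A -> Prop) : countable A -> countable {a | P a}.
Proof.
  intros (fA & HfA); exists (fun p => fA (proj1_sig p)).
  intros [a Ha] [a' Ha'] E; simpl in E; apply HfA in E; subst a'.
  f_equal; apply proof_irrelevance.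
Qed.

Lemma nat_injection_fresh (T : Type) (g : nat -> T) :
  (forall n m, g n = g m -> n = m) -> forall L : list T, exists x, ~ In x L.
Proof.
  intros Hg L; apply NNPP; intro HL.
  set (G := map g (seq 0 (S (length L)))).
  assert (HGL : incl G L) by (intros x _; apply NNPP; intro; apply HL; eauto).
  assert (HG : NoDup G) by (apply Injective_map_NoDup; [exact Hg | apply seq_NoDup]).
  pose proof (NoDup_incl_length HG HGL) as Hlen.
  unfold G in Hlen; rewrite length_map, length_seq in Hlen; lia.
Qed.

Definition outside {X : Type} (D : list X) (e : list (X * bool)) : Prop :=
  forall p, In p e -> ~ In (fst p) D.

Definition cyl_sub {X : Type} (d c : list (X * bool)) : Prop :=
  forall A, in_cyl d A -> in_cyl c A.

Definition assigns {X : Type} (D : list X) (s : list (X * bool)) : Prop :=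
  (forall p, In p s -> In (fst p) D) /\ (forall x, In x D -> exists b, In (x, b) s).

Lemma in_cyl_app {X : Type} (c d : list (X * bool)) (A : X -> Prop) :
  in_cyl (c ++ d) A <-> in_cyl c A /\ in_cyl d A.
Proof.
  unfold in_cyl; split.
  - intro H; split; intros p Hp; apply H, in_or_app; auto.
  - intros [Hc Hd] p Hp; apply in_app_or in Hp as [Hp | Hp]; auto.
Qed.

Lemma in_cyl_agree {X : Type} (c : list (X * bool)) (A : X -> Prop) x b b' :
  in_cyl c A -> In (x, b) c -> In (x, b') c -> b = b'.
Proof.
  intros HA Hb Hb'; apply HA in Hb; apply HA in Hb'; simpl in Hb, Hb'.
  destruct b, b'; intuition congruence.
Qed.

Fixpoint assignments {X : Type} (D : list X) : list (list (X * bool)) :=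
  match D with
  | [] => [[]]
  | x :: D => map (cons (x, true)) (assignments D) ++ map (cons (x, false)) (assignments D)
  end.

Lemma assignments_assigns {X : Type} (D : list X) s :
  In s (assignments D) -> assigns D s.
Proof.
  revert s; induction D as [|x D IH]; simpl; intros s Hs.
  - destruct Hs as [<- | []]; split; [intros p [] | intros x []].
  - apply in_app_or in Hs.
    destruct Hs as [Hs | Hs]; apply in_map_iff in Hs as (s' & <- & Hs');
      destruct (IH s' Hs') as [Hdom Htot]; split.
    1, 3: intros p [<- | Hp]; simpl; auto.
    all: intros y [<- | Hy]; [eexists; left; reflexivity|].
    all: destruct (Htot y Hy) as (b & Hb); exists b; right; exact Hb.
Qed.

Lemma assignments_cover {X : Type} (D : list X) (A : X -> Prop) :
  exists s, In s (assignments D) /\ in_cyl s A.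
Proof.
  induction D as [|x D (s & Hs & HA)]; simpl.
  - exists []; split; [now left | intros p []].
  - destruct (classic (A x)) as [Ax | Ax].
    + exists ((x, true) :: s); split.
      * apply in_or_app; left; now apply in_map.
      * intros p [<- | Hp]; simpl; [tauto | auto].
    + exists ((x, false) :: s); split.
      * apply in_or_app; right; now apply in_map.
      * intros p [<- | Hp]; simpl; [split; [tauto | discriminate] | auto].
Qed.

Definition patch {X : Type} (D : list X) (A0 A : X -> Prop) : X -> Prop :=
  fun x => (In x D /\ A0 x) \/ (~ In x D /\ A x).

Lemma in_cyl_patch_in {X : Type} (D : list X) s A0 A :
  assigns D s -> in_cyl s A0 -> in_cyl s (patch D A0 A).
Proof.
  intros [Hdom _] HA0 [x b] Hp; pose proof (Hdom _ Hp) as Hx; simpl in Hx.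
  rewrite <- (HA0 _ Hp); unfold patch; simpl; tauto.
Qed.

Lemma in_cyl_patch_out {X : Type} (D : list X) e A0 A :
  outside D e -> in_cyl e (patch D A0 A) <-> in_cyl e A.
Proof.
  intro He; split; intros HA [x b] Hp; pose proof (He _ Hp) as Hx; simpl in Hx;
    rewrite <- (HA _ Hp); unfold patch; simpl; tauto.
Qed.

Definition restrict_out {X : Type} (D : list X) (d : list (X * bool)) :=
  filter (fun p => if excluded_middle_informative (In (fst p) D) then false else true) d.

Lemma In_restrict_out {X : Type} (D : list X) d p :
  In p (restrict_out D d) <-> In p d /\ ~ In (fst p) D.
Proof.
  unfold restrict_out; rewrite filter_In.
  destruct (excluded_middle_informative (In (fst p) D)); intuition discriminate.
Qed.

Lemma in_cyl_restrict_out {X : Type} (D : list X) s d A1 A :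
  assigns D s -> in_cyl d A1 -> in_cyl s A1 ->
  in_cyl s A -> in_cyl (restrict_out D d) A -> in_cyl d A.
Proof.
  intros [_ Htot] HdA1 HsA1 HsA HrA [x b] Hp.
  destruct (classic (In x D)) as [Hx | Hx].
  - destruct (Htot x Hx) as (b' & Hb').
    assert (b = b').
    { apply (in_cyl_agree (d ++ s) A1 x); [now apply in_cyl_app | |];
        apply in_or_app; auto. }
    subst b'; exact (HsA _ Hb').
  - apply HrA, In_restrict_out; auto.
Qed.

Lemma nowhere_dense_shrink_off {X : Type} (N : (X -> Prop) -> Prop) (D : list X)
  (s e : list (X * bool)) :
  nowhere_dense N -> assigns D s -> outside D e -> cyl_nonempty e ->
  exists e', outside D e' /\ cyl_nonempty e' /\ cyl_sub e' e /\
    (forall A, in_cyl s A -> in_cyl e' A -> ~ N A).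
Proof.
  intros HN Hs He Hne.
  destruct (classic (cyl_nonempty (s ++ e))) as [Hse | Hse].
  - destruct (HN _ Hse) as (d & (A1 & HdA1) & Hdse & HdN).
    assert (HsA1 : in_cyl s A1) by now apply (in_cyl_app s e), Hdse.
    assert (Hout : outside D (restrict_out D d))
      by (intros p Hp; now apply In_restrict_out in Hp).
    exists (restrict_out D d); split; [exact Hout | split; [|split]].
    + exists A1; intros p Hp; apply In_restrict_out in Hp; now apply HdA1.
    + intros A HA.
      apply (in_cyl_patch_out D e A1 A He).
      apply (in_cyl_app s e), Hdse, (in_cyl_restrict_out D s d A1); auto.
      * now apply in_cyl_patch_in.
      * now apply in_cyl_patch_out.
    + intros A HsA HA; apply HdN, (in_cyl_restrict_out D s d A1); auto.
  - exists e; split; [exact He | split; [exact Hne | split]].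
    + intros A HA; exact HA.
    + intros A HsA HeA _; apply Hse; exists A; now apply in_cyl_app.
Qed.

Lemma nowhere_dense_shrink_off_all {X : Type} (N : (X -> Prop) -> Prop) (D : list X)
  (S : list (list (X * bool))) (e : list (X * bool)) :
  nowhere_dense N -> (forall s, In s S -> assigns D s) -> outside D e -> cyl_nonempty e ->
  exists e', outside D e' /\ cyl_nonempty e' /\ cyl_sub e' e /\
    (forall s, In s S -> forall A, in_cyl s A -> in_cyl e' A -> ~ N A).
Proof.
  intro HN; revert e; induction S as [|s S IH]; intros e HS He Hne.
  - exists e; split; [exact He | split; [exact Hne | split]].
    + intros A HA; exact HA.
    + intros s [].
  - destruct (nowhere_dense_shrink_off N D s e HN (HS s (or_introl eq_refl)) He Hne)
      as (e1 & He1 & Hne1 & Hsub1 & HN1).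
    destruct (IH e1 (fun s' Hs' => HS s' (or_intror Hs')) He1 Hne1)
      as (e2 & He2 & Hne2 & Hsub2 & HN2).
    exists e2; split; [exact He2 | split; [exact Hne2 | split]].
    + intros A HA; apply Hsub1, Hsub2, HA.
    + intros s' [<- | Hs'] A HsA HA; [apply HN1, Hsub2 | eapply HN2]; eauto.
Qed.

(* Shrinking from the cylinder [z ∈ A] guarantees a positive condition. *)
Lemma nowhere_dense_escape {X : Type} (N : (X -> Prop) -> Prop) (D : list X) (z : X) :
  nowhere_dense N -> ~ In z D ->
  exists e, outside D e /\ cyl_nonempty e /\ (forall A, in_cyl e A -> ~ N A) /\
    exists x, In (x, true) e.
Proof.
  intros HN Hz.
  assert (Hz_out : outside D [(z, true)]) by (intros p [<- | []]; exact Hz).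
  assert (Hz_ne : cyl_nonempty [(z, true)])
    by (exists (fun _ => True); intros p [<- | []]; simpl; tauto).
  destruct (nowhere_dense_shrink_off_all N D (assignments D) _ HN
              (assignments_assigns D) Hz_out Hz_ne) as (e & He & Hne & Hsub & HeN).
  exists e; split; [exact He | split; [exact Hne | split]].
  - intros A HA; destruct (assignments_cover D A) as (s & Hs & HsA); eauto.
  - apply NNPP; intro Hpos.
    assert (Hempty : in_cyl e (fun _ => False)).
    { intros [x [|]] Hp; simpl; [exfalso; eauto | split; [tauto | discriminate]]. }
    specialize (Hsub _ Hempty (z, true) (or_introl eq_refl)); simpl in Hsub; tauto.
Qed.

Lemma nowhere_dense_union {X : Type} (N1 N2 : (X -> Prop) -> Prop) :
  nowhere_dense N1 -> nowhere_dense N2 -> nowhere_dense (fun A => N1 A \/ N2 A).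
Proof.
  intros H1 H2 c Hc.
  destruct (H1 c Hc) as (d1 & Hd1 & Hsub1 & HN1).
  destruct (H2 d1 Hd1) as (d2 & Hd2 & Hsub2 & HN2).
  exists d2; split; [exact Hd2 | split].
  - intros A HA; apply Hsub1, Hsub2, HA.
  - intros A HA [HA1 | HA2]; [exact (HN1 A (Hsub2 A HA) HA1) | exact (HN2 A HA HA2)].
Qed.

Lemma nowhere_dense_subset {X : Type} (N M : (X -> Prop) -> Prop) :
  nowhere_dense N -> (forall A, M A -> N A) -> nowhere_dense M.
Proof.
  intros HN HMN c Hc; destruct (HN c Hc) as (d & Hd & Hsub & Hav).
  exists d; split; [exact Hd | split; [exact Hsub|]].
  intros A HA HMA; exact (Hav A HA (HMN A HMA)).
Qed.

Lemma meager_increasing_cover {X : Type} (M : (X -> Prop) -> Prop) :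
  meager M ->
  exists N : nat -> (X -> Prop) -> Prop,
    (forall n, nowhere_dense (N n)) /\
    (forall n m A, n <= m -> N n A -> N m A) /\
    (forall A, M A -> exists n, N n A).
Proof.
  intros (N & HN & Hcov).
  exists (fun n A => exists i, i <= n /\ N i A); split; [|split].
  - induction n as [|n IH].
    + apply (nowhere_dense_subset (N 0)); [apply HN|].
      intros A (i & Hi & HA); replace 0 with i by lia; exact HA.
    + apply (nowhere_dense_subset (fun A => (exists i, i <= n /\ N i A) \/ N (S n) A)).
      * now apply nowhere_dense_union.
      * intros A (i & Hi & HA).
        destruct (Nat.eq_dec i (S n)) as [-> | Hne]; [now right|].
        left; exists i; split; [lia | exact HA].
  - intros n m A Hnm (i & Hi & HA); exists i; split; [lia | exact HA].
  - intros A HA; destruct (Hcov A HA) as (n & Hn); exists n, n; auto.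
Qed.

Lemma In_map_fst_true {X : Type} (e : list (X * bool)) x :
  In x (map fst (filter snd e)) <-> In (x, true) e.
Proof.
  rewrite in_map_iff; split.
  - intros ([y b] & <- & Hp); apply filter_In in Hp as [Hp Hb]; simpl in *; now subst b.
  - intro Hx; exists (x, true); split; [reflexivity | now apply filter_In].
Qed.

Section Blocks.

Variables (X : Type) (fX : X -> nat) (N : nat -> (X -> Prop) -> Prop).
Variable stage : nat -> list X -> list (X * bool).
Hypothesis stage_outside : forall k D, outside D (stage k D).
Hypothesis stage_nonempty : forall k D, cyl_nonempty (stage k D).
Hypothesis stage_avoid : forall k D A, in_cyl (stage k D) A -> ~ N k A.
Hypothesis stage_positive : forall k D, exists x, In (x, true) (stage k D).
Variable level : nat -> list X.
Hypothesis level_spec : forall x, In x (level (fX x)).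

(* Putting [level k] into [used (S k)] keeps the later stages off the points
   of index [k]. *)
Fixpoint used (k : nat) : list X :=
  match k with
  | 0 => []
  | S k => level k ++ map fst (stage k (used k)) ++ used k
  end.

Definition cond (k : nat) : list (X * bool) := stage k (used k).

Definition block (k : nat) : list X := map fst (filter snd (cond k)).

Lemma used_mono k k' : k <= k' -> incl (used k) (used k').
Proof.
  induction 1 as [|k' _ IH]; [intros x Hx; exact Hx|].
  intros x Hx; simpl; do 2 (apply in_or_app; right); auto.
Qed.

Lemma cond_used i k x b : i < k -> In (x, b) (cond i) -> In x (used k).
Proof.
  intros Hik Hx; apply (used_mono (S i)); [lia|]; simpl.
  apply in_or_app; right; apply in_or_app; left.
  apply in_map_iff; exists (x, b); auto.
Qed.

Lemma cond_fresh k x b : In (x, b) (cond k) -> ~ In x (used k).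
Proof. intro Hx; exact (stage_outside k (used k) _ Hx). Qed.

Lemma cond_true_false k k' x :
  In (x, true) (cond k') -> In (x, false) (cond k) -> False.
Proof.
  intros Hk' Hk; destruct (lt_eq_lt_dec k' k) as [[Hlt | <-] | Hlt].
  - exact (cond_fresh k x false Hk (cond_used k' k x true Hlt Hk')).
  - destruct (stage_nonempty k' (used k')) as (A & HA).
    discriminate (in_cyl_agree _ A x true false HA Hk' Hk).
  - exact (cond_fresh k' x true Hk' (cond_used k k' x false Hlt Hk)).
Qed.

Lemma block_nonempty k : block k <> [].
Proof.
  destruct (stage_positive k (used k)) as (x & Hx); intro Hk.
  assert (Hblock : In x (block k)) by (apply In_map_fst_true; exact Hx).
  rewrite Hk in Hblock; exact Hblock.
Qed.

Lemma block_index k x : In x (block k) -> k <= fX x.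
Proof.
  intro Hx; apply In_map_fst_true, cond_fresh in Hx.
  destruct (le_lt_dec k (fX x)) as [Hle | Hlt]; [exact Hle | exfalso; apply Hx].
  apply (used_mono (S (fX x))); [lia|]; simpl; apply in_or_app; left; apply level_spec.
Qed.

Hypothesis N_mono : forall n m A, n <= m -> N n A -> N m A.

(* [A] cut down to the positive conditions still lies in [M], and if it
   contained [block k] it would satisfy [cond k]. *)
Lemma block_escapes (M : (X -> Prop) -> Prop) :
  (forall A B, M B -> subset A B -> M A) -> (forall A, M A -> exists n, N n A) ->
  forall A, M A -> exists n, forall k, n <= k -> ~ (forall x, In x (block k) -> A x).
Proof.
  intros Msub Mcov A HA.
  set (A' := fun x => A x /\ exists k, In (x, true) (cond k)).
  destruct (Mcov A') as (n & Hn); [apply (Msub A' A HA); intros x []; auto|].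
  exists n; intros k Hnk Hblock.
  apply (stage_avoid k (used k) A'); [|exact (N_mono n k A' Hnk Hn)].
  intros [x [|]] Hx; simpl.
  - split; [reflexivity|]; intros _; split; [apply Hblock, In_map_fst_true, Hx | eauto].
  - split; [intros (_ & k' & Hk') | discriminate].
    exfalso; exact (cond_true_false k k' x Hk' Hx).
Qed.

End Blocks.

Lemma meager_blocks (X : Type) (M : (X -> Prop) -> Prop) (fX : X -> nat) (g : nat -> X) :
  (forall x y, fX x = fX y -> x = y) -> (forall n m, g n = g m -> n = m) ->
  (forall A B, M B -> subset A B -> M A) -> meager M ->
  exists S : nat -> list X,
    (forall k, S k <> []) /\
    (forall k x, In x (S k) -> k <= fX x) /\
    (forall A, M A -> exists n, forall k, n <= k -> ~ (forall x, In x (S k) -> A x)).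
Proof.
  intros HfX Hg Msub HM.
  destruct (meager_increasing_cover M HM) as (N & HN & N_mono & N_cover).
  destruct (choice (fun (kD : nat * list X) e =>
      outside (snd kD) e /\ cyl_nonempty e /\ (forall A, in_cyl e A -> ~ N (fst kD) A) /\
      exists x, In (x, true) e)) as (stage & Hstage).
  { intros [k D]; destruct (nat_injection_fresh X g Hg D) as (z & Hz).
    exact (nowhere_dense_escape (N k) D z (HN k) Hz). }
  destruct (choice (fun m l => forall x, fX x = m -> In x l)) as (level & Hlevel).
  { intro m; destruct (classic (exists x, fX x = m)) as [(x & Hx) | Hm].
    - exists [x]; intros y Hy; left; apply HfX; congruence.
    - exists []; intros y Hy; exfalso; eauto. }
  set (stage' := fun k D => stage (k, D)).
  exists (block X stage' level); split; [|split].
  - apply block_nonempty; intros k D; apply (Hstage (k, D)).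
  - apply block_index; intros; [apply (Hstage (k, D)) | apply Hlevel; reflexivity].
  - apply (block_escapes X N stage'); auto; intros k D; apply (Hstage (k, D)).
Qed.

Definition partial_bijection {X Y : Type} (l : list (X * Y)) : Prop :=
  (forall x y y', In (x, y) l -> In (x, y') l -> y = y') /\
  (forall x x' y, In (x, y) l -> In (x', y) l -> x = x').

Lemma partial_bijection_nil {X Y : Type} : @partial_bijection X Y [].
Proof. split; intros ? ? ? []. Qed.

Lemma partial_bijection_cons {X Y : Type} (l : list (X * Y)) x y :
  partial_bijection l -> ~ In x (map fst l) -> ~ In y (map snd l) ->
  partial_bijection ((x, y) :: l).
Proof.
  intros [Hfun Hinj] Hx Hy.
  assert (Hx' : forall y', ~ In (x, y') l)
    by (intros y' Hxy; apply Hx, in_map_iff; now exists (x, y')).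
  assert (Hy' : forall x', ~ In (x', y) l)
    by (intros x' Hxy; apply Hy, in_map_iff; now exists (x', y)).
  split.
  - intros a b b' [E | Hb] [E' | Hb']; try congruence; eauto.
    + injection E as <- <-; now destruct (Hx' b').
    + injection E' as <- <-; now destruct (Hx' b).
  - intros a a' b [E | Ha] [E' | Ha']; try congruence; eauto.
    + injection E as <- <-; now destruct (Hy' a').
    + injection E' as <- <-; now destruct (Hy' a).
Qed.

Lemma extend_dom {X Y : Type} (P : X -> Prop) (l : list (X * Y)) :
  (forall L : list Y, exists y, ~ In y L) -> (forall x x', P x -> P x' -> x = x') ->
  partial_bijection l ->
  exists l', partial_bijection l' /\ incl l l' /\ forall x, P x -> exists y, In (x, y) l'.
Proof.
  intros freshY HP Hl.
  destruct (classic (exists x, P x /\ ~ exists y, In (x, y) l)) as [(x & Hx & Hxl) | Hall].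
  - destruct (freshY (map snd l)) as (y & Hy).
    exists ((x, y) :: l); split; [|split; [intros p Hp; now right|]].
    + apply partial_bijection_cons; [exact Hl | | exact Hy].
      intro Hxm; apply in_map_iff in Hxm as ([x' y'] & E & Hp); simpl in E; subst x'; eauto.
    + intros x' Hx'; rewrite (HP x' x Hx' Hx); exists y; now left.
  - exists l; split; [exact Hl | split; [intros p Hp; exact Hp|]].
    intros x Hx; apply NNPP; intro Hxl; eauto.
Qed.

Lemma extend_ran {X Y : Type} (P : Y -> Prop) (l : list (X * Y)) :
  (forall L : list X, exists x, ~ In x L) -> (forall y y', P y -> P y' -> y = y') ->
  partial_bijection l ->
  exists l', partial_bijection l' /\ incl l l' /\ forall y, P y -> exists x, In (x, y) l'.
Proof.
  intros freshX HP Hl.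
  destruct (classic (exists y, P y /\ ~ exists x, In (x, y) l)) as [(y & Hy & Hyl) | Hall].
  - destruct (freshX (map fst l)) as (x & Hx).
    exists ((x, y) :: l); split; [|split; [intros p Hp; now right|]].
    + apply partial_bijection_cons; [exact Hl | exact Hx |].
      intro Hym; apply in_map_iff in Hym as ([x' y'] & E & Hp); simpl in E; subst y'; eauto.
    + intros y' Hy'; rewrite (HP y' y Hy' Hy); exists x; now left.
  - exists l; split; [exact Hl | split; [intros p Hp; exact Hp|]].
    intros y Hy; apply NNPP; intro Hyl; eauto.
Qed.

Lemma extend_into {X Y : Type} (B : Y -> Prop) (l : list (X * Y)) (xs : list X) :
  (forall L : list Y, exists y, B y /\ ~ In y L) -> partial_bijection l ->
  (forall x, In x xs -> ~ In x (map fst l)) ->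
  exists l', partial_bijection l' /\ incl l l' /\
    (forall x, In x xs -> exists y, In (x, y) l' /\ B y) /\
    (forall x y, In (x, y) l' -> In (x, y) l \/ (In x xs /\ B y)).
Proof.
  intros HB Hl; induction xs as [|x xs IH]; intros Hxs.
  - exists l; split; [exact Hl | split; [intros p Hp; exact Hp | split]].
    + intros x [].
    + intros x y Hxy; now left.
  - destruct IH as (q & Hq & Hlq & Hq_into & Hq_new); [intros z Hz; apply Hxs; now right|].
    destruct (classic (In x (map fst q))) as [Hxq | Hxq].
    + exists q; split; [exact Hq | split; [exact Hlq | split]].
      * intros z [<- | Hz]; [|auto].
        apply in_map_iff in Hxq as ([z y] & E & Hzy); simpl in E; subst z.
        destruct (Hq_new _ _ Hzy) as [Hl' | [_ By]]; [|eauto].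
        exfalso; apply (Hxs x (or_introl eq_refl)), in_map_iff; now exists (x, y).
      * intros a b Hab; destruct (Hq_new a b Hab) as [| [? ?]];
          [now left | right; split; [now right | auto]].
    + destruct (HB (map snd q)) as (y & By & Hy).
      exists ((x, y) :: q); split; [now apply partial_bijection_cons|].
      split; [intros p Hp; right; auto | split].
      * intros z [<- | Hz]; [exists y; split; [now left | exact By]|].
        destruct (Hq_into z Hz) as (y' & ? & ?); exists y'; split; [now right | auto].
      * intros a b [E | Hab]; [injection E as <- <-; right; split; [now left | exact By]|].
        destruct (Hq_new a b Hab) as [| [? ?]]; [now left | right; split; [now right | auto]].
Qed.

Section FilterUnion.

Variables X Y : Type.

Definition pbij : Type := {l : list (X * Y) | partial_bijection l}.

Definition pbij_le (q p : pbij) : Prop := incl (proj1_sig p) (proj1_sig q).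

Lemma pbij_preorder : is_preorder pbij_le.
Proof. split; [intros p a Ha; exact Ha | intros p q r Hpq Hqr a Ha; auto]. Qed.

Lemma pbij_dense (R : list (X * Y) -> Prop) :
  (forall l, partial_bijection l -> exists l', partial_bijection l' /\ incl l l' /\ R l') ->
  dense_in pbij_le (fun p => R (proj1_sig p)).
Proof.
  intros HR [l Hl]; destruct (HR l Hl) as (l' & Hl' & Hll' & HRl').
  exists (exist _ l' Hl'); split; [exact HRl' | exact Hll'].
Qed.

Lemma filter_union_bijection (G : pbij -> Prop) :
  is_filter pbij_le G ->
  (forall x, exists y p, G p /\ In (x, y) (proj1_sig p)) ->
  (forall y, exists x p, G p /\ In (x, y) (proj1_sig p)) ->
  exists (f : X -> Y) (g : Y -> X),
    (forall x, g (f x) = x) /\ (forall y, f (g y) = y) /\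
    (forall p x y, G p -> In (x, y) (proj1_sig p) -> f x = y).
Proof.
  intros (_ & _ & Hdir) Hdom Hran.
  assert (Hcompat : forall p q x y x' y', G p -> G q ->
            In (x, y) (proj1_sig p) -> In (x', y') (proj1_sig q) ->
            (x = x' -> y = y') /\ (y = y' -> x = x')).
  { intros p q x y x' y' Gp Gq Hp Hq.
    destruct (Hdir p q Gp Gq) as ([r [Hfun Hinj]] & _ & Hpr & Hqr).
    split; intros <-; [eapply Hfun | eapply Hinj];
      [apply Hpr | apply Hqr | apply Hpr | apply Hqr]; eassumption. }
  destruct (choice _ Hdom) as (f & Hf), (choice _ Hran) as (g & Hg).
  exists f, g; split; [|split].
  - intro x; destruct (Hf x) as (p & Gp & Hp), (Hg (f x)) as (q & Gq & Hq).
    symmetry; exact (proj2 (Hcompat p q _ _ _ _ Gp Gq Hp Hq) eq_refl).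
  - intro y; destruct (Hg y) as (p & Gp & Hp), (Hf (g y)) as (q & Gq & Hq).
    symmetry; exact (proj1 (Hcompat p q _ _ _ _ Gp Gq Hp Hq) eq_refl).
  - intros p x y Gp Hp; destruct (Hf x) as (q & Gq & Hq).
    exact (proj1 (Hcompat q p _ _ _ _ Gq Gp Hq Hp) eq_refl).
Qed.

End FilterUnion.

Section GenericBijection.

Variables (X Y J : Type) (fX : X -> nat) (fY : Y -> nat).
Hypotheses (fX_inj : forall x x', fX x = fX x' -> x = x')
           (fY_inj : forall y y', fY y = fY y' -> y = y').
Hypotheses (freshX : forall L : list X, exists x, ~ In x L)
           (freshY : forall L : list Y, exists y, ~ In y L).
Variable blocks : nat -> list X.
Hypothesis blocks_index : forall k x, In x (blocks k) -> k <= fX x.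

Definition covers (n : nat) (l : list (X * Y)) : Prop :=
  (forall x, fX x = n -> exists y, In (x, y) l) /\
  (forall y, fY y = n -> exists x, In (x, y) l).

Definition hits (V : Y -> Prop) (l : list (X * Y)) : Prop :=
  exists k, forall x, In x (blocks k) -> exists y, In (x, y) l /\ V y.

Lemma covers_incl n l l' : incl l l' -> covers n l -> covers n l'.
Proof.
  intros Hll' [Hdom Hran]; split.
  - intros x Hx; destruct (Hdom x Hx) as (y & Hy); eauto.
  - intros y Hy; destruct (Hran y Hy) as (x & Hx); eauto.
Qed.

Lemma covers_extend n l : partial_bijection l ->
  exists l', partial_bijection l' /\ incl l l' /\ covers n l'.
Proof.
  intro Hl.
  destruct (extend_dom (fun x => fX x = n) l freshY) as (l1 & Hl1 & Hll1 & Hdom);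
    [intros x x' Hx Hx'; apply fX_inj; congruence | exact Hl |].
  destruct (extend_ran (fun y => fY y = n) l1 freshX) as (l2 & Hl2 & Hl12 & Hran);
    [intros y y' Hy Hy'; apply fY_inj; congruence | exact Hl1 |].
  exists l2; split; [exact Hl2 | split; [intros p Hp; auto | split; [|exact Hran]]].
  intros x Hx; destruct (Hdom x Hx) as (y & Hy); eauto.
Qed.

(* Blocks past the largest index in the domain of [l] are off that domain. *)
Lemma hits_extend (V : Y -> Prop) l :
  (forall L : list Y, exists y, V y /\ ~ In y L) -> partial_bijection l ->
  exists l', partial_bijection l' /\ incl l l' /\ hits V l'.
Proof.
  intros HV Hl.
  set (k := 1 + list_max (map fX (map fst l))).
  destruct (extend_into V l (blocks k) HV Hl) as (l' & Hl' & Hll' & Hinto & _).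
  - intros x Hx Hxl.
    assert (Hmax : fX x <= list_max (map fX (map fst l))).
    { pose proof (proj1 (list_max_le (map fX (map fst l)) _) (le_n _)) as Hall.
      rewrite Forall_forall in Hall; now apply Hall, in_map. }
    pose proof (blocks_index k x Hx) as Hk; unfold k in Hk; lia.
  - exists l'; split; [exact Hl' | split; [exact Hll' | exists k; exact Hinto]].
Qed.

Variable B : J -> Y -> Prop.
Hypothesis B_infinite : forall j (L : list Y), exists y, B j y /\ ~ In y L.
Variable h : nat -> J.
Hypothesis h_inj : forall n m, h n = h m -> n = m.

(* The countably many requirements [covers n] are attached to the indices
   [h n], so that [J] indexes all the dense sets. *)
Definition requirement (j : J) (l : list (X * Y)) : Prop :=
  (forall n, h n = j -> covers n l) /\ hits (B j) l.

Lemma requirement_extend j l : partial_bijection l ->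
  exists l', partial_bijection l' /\ incl l l' /\ requirement j l'.
Proof.
  intro Hl; destruct (classic (exists n, h n = j)) as [(n & Hn) | Hj].
  - destruct (covers_extend n l Hl) as (l1 & Hl1 & Hll1 & Hcov).
    destruct (hits_extend (B j) l1 (B_infinite j) Hl1) as (l2 & Hl2 & Hl12 & Hhits).
    exists l2; split; [exact Hl2 | split; [intros p Hp; auto | split; [|exact Hhits]]].
    intros n' Hn'; rewrite (h_inj n' n) by congruence.
    exact (covers_incl n l1 l2 Hl12 Hcov).
  - destruct (hits_extend (B j) l (B_infinite j) Hl) as (l' & Hl' & Hll' & Hhits).
    exists l'; split; [exact Hl' | split; [exact Hll' | split; [|exact Hhits]]].
    intros n Hn; exfalso; eauto.
Qed.

Lemma countable_pbij : countable (pbij X Y).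
Proof.
  apply countable_sig, countable_list, countable_prod;
    [exists fX; exact fX_inj | exists fY; exact fY_inj].
Qed.

Theorem MA_generic_bijection : MA_countable J ->
  exists (f : X -> Y) (g : Y -> X),
    (forall x, g (f x) = x) /\ (forall y, f (g y) = y) /\
    (forall j, exists k, forall x, In x (blocks k) -> B j (f x)).
Proof.
  intro MA.
  destruct (MA (pbij X Y) (pbij_le X Y) (pbij_preorder X Y) countable_pbij
              (inhabits (exist _ [] partial_bijection_nil))
              (fun j p => requirement j (proj1_sig p)))
    as (G & HG & Hgeneric).
  { intro j; apply pbij_dense, requirement_extend. }
  assert (Hcovers : forall n, exists p, G p /\ covers n (proj1_sig p)).
  { intro n; destruct (Hgeneric (h n)) as (p & Gp & Hcov & _); eauto. }
  destruct (filter_union_bijection X Y G HG) as (f & g & gf & fg & Hf).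
  - intro x; destruct (Hcovers (fX x)) as (p & Gp & Hdom & _).
    destruct (Hdom x eq_refl) as (y & Hy); eauto.
  - intro y; destruct (Hcovers (fY y)) as (p & Gp & _ & Hran).
    destruct (Hran y eq_refl) as (x & Hx); eauto.
  - exists f, g; split; [exact gf | split; [exact fg|]].
    intro j; destruct (Hgeneric j) as (p & Gp & _ & k & Hk).
    exists k; intros x Hx; destruct (Hk x Hx) as (y & Hy & By).
    now rewrite (Hf p x y Gp Hy).
Qed.

End GenericBijection.

Section PiBase.

Variables (Y J : Type) (rho : (Y -> Prop) -> Prop) (B : J -> Y -> Prop).
Hypotheses (rho_top : is_topology rho) (rho_T1 : T1 rho) (rho_crowded : crowded rho).
Hypothesis B_pi_base : is_pi_base rho B.

Lemma pi_base_infinite j (L : list Y) : exists y, B j y /\ ~ In y L.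
Proof.
  destruct (proj1 B_pi_base j) as (HBj & y & Hy).
  exact (crowded_open_infinite Y rho rho_top rho_T1 rho_crowded (B j) y HBj Hy L).
Qed.

Hypothesis Y_inhabited : inhabited Y.

Lemma pi_base_avoid (L : list Y) : exists j, forall y, B j y -> ~ In y L.
Proof.
  destruct (crowded_fresh Y rho rho_top rho_T1 rho_crowded Y_inhabited L) as (y & Hy).
  apply (proj2 B_pi_base); [apply open_compl_list; assumption | now exists y].
Qed.

Fixpoint avoiding_points (step : list Y -> J * Y) (n : nat) : list Y :=
  match n with
  | 0 => []
  | S n => snd (step (avoiding_points step n)) :: avoiding_points step n
  end.

Lemma avoiding_points_In (step : list Y -> J * Y) m n :
  m < n -> In (snd (step (avoiding_points step m))) (avoiding_points step n).
Proof.
  induction n as [|n IH]; intro Hmn; [lia|]; simpl.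
  destruct (Nat.eq_dec m n) as [-> | Hne]; [now left | right; apply IH; lia].
Qed.

(* Stage [n] picks a member of the pi-base avoiding the points picked
   inside the earlier members, so the members picked are all distinct. *)
Lemma pi_base_nat_injection : exists h : nat -> J, forall n m, h n = h m -> n = m.
Proof.
  destruct (choice (fun L (jy : J * Y) =>
      B (fst jy) (snd jy) /\ forall y, B (fst jy) y -> ~ In y L)) as (step & Hstep).
  { intro L; destruct (pi_base_avoid L) as (j & Hj).
    destruct (proj1 B_pi_base j) as (_ & y & Hy); now exists (j, y). }
  set (h := fun n => fst (step (avoiding_points step n))).
  assert (Hlt : forall m n, m < n -> h m <> h n).
  { intros m n Hmn E.
    apply (proj2 (Hstep (avoiding_points step n)) (snd (step (avoiding_points step m)))).
    - unfold h in E; rewrite <- E; apply Hstep.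
    - now apply avoiding_points_In. }
  exists h; intros n m E.
  destruct (lt_eq_lt_dec n m) as [[Hnm | Hnm] | Hnm]; [| exact Hnm |];
    exfalso; [exact (Hlt n m Hnm E) | exact (Hlt m n Hnm (eq_sym E))].
Qed.

End PiBase.

Section Transport.

Variables (X Y : Type) (rho : (Y -> Prop) -> Prop) (f : X -> Y) (g : Y -> X).
Hypotheses (gf : forall x, g (f x) = x) (fg : forall y, f (g y) = y).

Definition pullback (U : X -> Prop) : Prop := rho (fun y => U (g y)).

Lemma pullback_topology : is_topology rho -> is_topology pullback.
Proof.
  intros (Hempty & Hfull & Hunion & Hinter); unfold pullback.
  split; [exact Hempty | split; [exact Hfull | split]].
  - intros F HF.
    replace (fun y => exists U, F U /\ U (g y))
      with (fun y => exists V, (exists U, F U /\ V = (fun y' => U (g y'))) /\ V y).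
    + apply Hunion; intros V (U & HU & ->); now apply HF.
    + apply set_ext; intro y; split.
      * intros (V & (U & HU & ->) & HV); eauto.
      * intros (U & HU & HUy); exists (fun y' => U (g y')); eauto.
  - intros U V HU HV; now apply Hinter.
Qed.

Lemma pullback_homeomorphic : homeomorphic pullback rho.
Proof.
  exists f, g; split; [exact gf | split; [exact fg | split]].
  - intros V HV; unfold pullback.
    replace (fun y => V (f (g y))) with V by (apply set_ext; intro y; now rewrite fg).
    exact HV.
  - intros U HU; exact HU.
Qed.

End Transport.

Arguments pullback {X Y} rho g U.

Section IdealCrowded.

Variables (X Y J : Type) (rho : (Y -> Prop) -> Prop) (B : J -> Y -> Prop).
Hypotheses (rho_top : is_topology rho) (rho_T1 : T1 rho) (rho_crowded : crowded rho).
Hypothesis B_pi_base : is_pi_base rho B.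
Variables (f : X -> Y) (g : Y -> X) (blocks : nat -> list X).
Hypothesis gf : forall x, g (f x) = x.
Hypothesis blocks_nonempty : forall k, blocks k <> [].
Hypothesis B_blocks : forall j, exists k, forall x, In x (blocks k) -> B j (f x).

(* Remove the images of the first [n] blocks from [W] and take a member of
   the pi-base inside what is left. *)
Lemma open_contains_late_block (W : Y -> Prop) (y : Y) : rho W -> W y ->
  forall n, exists k, n <= k /\ forall x, In x (blocks k) -> W (f x).
Proof.
  intros HW Hy n.
  set (L := flat_map (fun k => map f (blocks k)) (seq 0 n)).
  destruct (proj2 B_pi_base (fun y => W y /\ ~ In y L)) as (j & Hj).
  - apply open_inter; [exact rho_top | exact HW | now apply open_compl_list].
  - destruct (crowded_open_infinite Y rho rho_top rho_T1 rho_crowded W y HW Hy L) as (y' & ?).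
    now exists y'.
  - destruct (B_blocks j) as (k & Hk); exists k; split.
    + destruct (le_lt_dec n k) as [Hle | Hlt]; [exact Hle | exfalso].
      destruct (blocks k) as [|x xs] eqn:Ek; [exact (blocks_nonempty k Ek)|].
      apply (proj2 (Hj _ (Hk x (or_introl eq_refl)))).
      apply in_flat_map; exists k; split; [apply in_seq; lia | rewrite Ek; now left].
    + intros x Hx; exact (proj1 (Hj _ (Hk x Hx))).
Qed.

Lemma pullback_ideal_crowded (M : (X -> Prop) -> Prop) :
  (forall A, M A -> exists n, forall k, n <= k -> ~ (forall x, In x (blocks k) -> A x)) ->
  I_crowded M (pullback rho g).
Proof.
  intros Hescape U HU HMU x HUx.
  destruct (Hescape U HMU) as (n & Hn).
  destruct (open_contains_late_block (fun y => U (g y)) (f x) HU) with (n := n)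
    as (k & Hnk & Hk); [now rewrite gf|].
  apply (Hn k Hnk); intros z Hz; rewrite <- (gf z); exact (Hk z Hz).
Qed.

End IdealCrowded.

Theorem mainTheorem10 (X : Type) (I : (X -> Prop) -> Prop)
  (Y : Type) (rho : (Y -> Prop) -> Prop) :
  countably_infinite X ->
  is_ideal I -> meager I ->
  countable Y -> inhabited Y ->
  is_topology rho -> T1 rho -> crowded rho ->
  piweight_lt_mc rho ->
  exists tau : (X -> Prop) -> Prop,
    is_topology tau /\ I_crowded I tau /\ homeomorphic tau rho.
Proof.
  intros [(fX & fX_inj) (gX & gX_inj)] (I_sub & _) I_meager (fY & fY_inj) Y_inh
    rho_top rho_T1 rho_crowded (J & B & B_pi_base & J_small).
  assert (MA : MA_countable J)
    by (apply NNPP; intro HMA; apply (J_small J HMA); now exists (fun j => j)).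
  destruct (pi_base_nat_injection _ _ _ _ rho_top rho_T1 rho_crowded B_pi_base Y_inh)
    as (h & h_inj).
  destruct (meager_blocks X I fX gX fX_inj gX_inj I_sub I_meager)
    as (blocks & blocks_nonempty & blocks_index & blocks_escape).
  destruct (MA_generic_bijection X Y J fX fY fX_inj fY_inj (nat_injection_fresh X gX gX_inj)
              (crowded_fresh Y rho rho_top rho_T1 rho_crowded Y_inh) blocks blocks_index
              B (pi_base_infinite _ _ _ _ rho_top rho_T1 rho_crowded B_pi_base) h h_inj MA)
    as (f & g & gf & fg & B_blocks).
  exists (pullback rho g); split; [|split].
  - now apply pullback_topology.
  - exact (pullback_ideal_crowded _ _ _ _ _ rho_top rho_T1 rho_crowded B_pi_base
             f g blocks gf blocks_nonempty B_blocks I blocks_escape).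
  - exact (pullback_homeomorphic X Y rho f g gf fg).
Qed.
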